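(* Let $R$ be a ring, let $\mathcal{S}$ be a multiplicative class of $R$-modules, and let $M$ and $N$ be $R$-modules. Then: (i) if $M\cong N$ and $N\in\mathcal{S}$, then $M\in\mathcal{S}$; (ii) the set $\operatorname{Dec}_\mathcal{S}(M)$ is non-empty. Suppose in addition that $\mathcal{S}$ is saturated and that $M$ has finite length, and let $(A_1,A_2),(B_1,B_2)\in\operatorname{Dec}_\mathcal{S}(M)$. Then: (iii) $(A_1,A_2)$ is a maximal element of $\operatorname{Dec}_\mathcal{S}(M)$ if and only if $0$ is the only divisor of $A_1$ that lies in $\mathcal{S}$; (iv) the set of maximal elements of $\operatorname{Dec}_\mathcal{S}(M)$ is non-empty and is a single orbit of $\operatorname{Dec}_\mathcal{S}(M)$ under the action of $\operatorname{Aut}(M)$; (v) if $(A_1,A_2)$ and $(B_1,B_2)$ are maximal in $\operatorname{Dec}_\mathcal{S}(M)$, then $(A_1,B_2)$ and $(B_1,A_2)$ are maximal elements of $\operatorname{Dec}_\mathcal{S}(M)$ (in particular they belong to it).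
   Context: Modules are left modules; a module has finite length if every totally ordered set of submodules is finite. An $R$-module $D$ is a divisor of $M$ if $M\cong D\oplus N$ for some $R$-module $N$. A class $\mathcal{S}$ of $R$-modules is multiplicative if $0\in\mathcal{S}$ and for all $R$-modules $M,N,D$ with $M\cong N\oplus D$ and $N,D\in\mathcal{S}$ one has $M\in\mathcal{S}$; it is saturated if moreover every divisor of a member of $\mathcal{S}$ is in $\mathcal{S}$. $\operatorname{Dec}(M)$ is the set of pairs $(D,N)$ of submodules of $M$ such that the natural map $D\oplus N\to M$ is an isomorphism, partially ordered by $(D,N)\leq(D',N')$ iff there is a submodule $C\subset M$ with $D=D'\oplus C$ and $N\oplus C=N'$ (internal direct sums). $\operatorname{Dec}_\mathcal{S}(M)=\{(M_1,M_2)\in\operatorname{Dec}(M): M_2\in\mathcal{S}\}$ with the induced partial order. $\operatorname{Aut}(M)$ acts on $\operatorname{Dec}(M)$ coordinate-wise. *)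

From HB Require Import structures.
From mathcomp Require Import all_boot all_algebra.
Set Implicit Arguments. Unset Strict Implicit. Unset Printing Implicit Defensive.
Import GRing.Theory.
Local Open Scope ring_scope.

Definition is_lin (R : pzRingType) (U V : lmodType R) (f : U -> V) : Prop :=
  forall (a : R) (x y : U), f (a *: x + y) = a *: f x + f y.

Definition mod_iso (R : pzRingType) (U V : lmodType R) : Prop :=
  exists f : U -> V, is_lin f /\ bijective f.

Definition is_zero_mod (R : pzRingType) (Z : lmodType R) : Prop :=
  forall z : Z, z = 0.

Definition mod_class (R : pzRingType) := lmodType R -> Prop.

Definition multiplicative (R : pzRingType) (S : mod_class R) : Prop :=
  (exists Z : lmodType R, is_zero_mod Z /\ S Z) /\
  (forall M N D : lmodType R, mod_iso M (N * D)%type -> S N -> S D -> S M).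

Definition divisor (R : pzRingType) (D M : lmodType R) : Prop :=
  exists N : lmodType R, mod_iso M (D * N)%type.

Definition saturated (R : pzRingType) (S : mod_class R) : Prop :=
  multiplicative S /\ (forall M D : lmodType R, S M -> divisor D M -> S D).

Definition is_submod (R : pzRingType) (M : lmodType R) (P : {pred M}) : Prop :=
  0 \in P /\ forall (a : R) (x y : M), x \in P -> y \in P -> a *: x + y \in P.

Section SubModule.
Variables (R : pzRingType) (M : lmodType R) (P : {pred M}) (HP : is_submod P).

Definition subm of is_submod P : Type := {x : M | x \in P}.
Local Notation sT := (subm HP).
HB.instance Definition _ := Choice.on sT.

Let cl a x y : x \in P -> y \in P -> a *: x + y \in P := proj2 HP a x y.
Let cl0 : 0 \in P := proj1 HP.
Let clD x y : x \in P -> y \in P -> x + y \in P.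
Proof. by move=> hx hy; have := cl 1 hx hy; rewrite scale1r. Qed.
Let clZ a x : x \in P -> a *: x \in P.
Proof. by move=> hx; have := cl a hx cl0; rewrite addr0. Qed.
Let clN x : x \in P -> - x \in P.
Proof. by move=> hx; have := clZ (-1) hx; rewrite scaleN1r. Qed.

Definition subm_zero : sT := exist _ 0 cl0.
Definition subm_add (x y : sT) : sT := exist _ (val x + val y) (clD (valP x) (valP y)).
Definition subm_opp (x : sT) : sT := exist _ (- val x) (clN (valP x)).
Definition subm_scale (a : R) (x : sT) : sT := exist _ (a *: val x) (clZ a (valP x)).

Fact subm_addA : associative subm_add.
Proof. by move=> x y z; apply: val_inj; rewrite /= addrA. Qed.
Fact subm_addC : commutative subm_add.
Proof. by move=> x y; apply: val_inj; rewrite /= addrC. Qed.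
Fact subm_add0 : left_id subm_zero subm_add.
Proof. by move=> x; apply: val_inj; rewrite /= add0r. Qed.
Fact subm_addN : left_inverse subm_zero subm_opp subm_add.
Proof. by move=> x; apply: val_inj; rewrite /= addNr. Qed.
HB.instance Definition _ := GRing.isZmodule.Build sT subm_addA subm_addC subm_add0 subm_addN.

Fact subm_scaleA a b v : subm_scale a (subm_scale b v) = subm_scale (a * b) v.
Proof. by apply: val_inj; rewrite /= scalerA. Qed.
Fact subm_scale1 : left_id 1 subm_scale.
Proof. by move=> x; apply: val_inj; rewrite /= scale1r. Qed.
Fact subm_scaleDr : right_distributive subm_scale +%R.
Proof. by move=> a x y; apply: val_inj; rewrite /= scalerDr. Qed.
Fact subm_scaleDl v : {morph subm_scale^~ v: a b / a + b}.
Proof. by move=> a b; apply: val_inj; rewrite /= scalerDl. Qed.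
HB.instance Definition _ := GRing.Zmodule_isLmodule.Build R sT
  subm_scaleA subm_scale1 subm_scaleDr subm_scaleDl.
End SubModule.

(* Subset with the proof argument as part of the type, so that the
   lmodType structure is found by inference. *)
Definition submod_of (R : pzRingType) (M : lmodType R) (P : {pred M})
  (HP : is_submod P) : lmodType R := subm HP.

(* (D, N) in Dec(M): D, N submodules and the natural map D (+) N -> M,
   (d, n) |-> d + n, is bijective (written out). *)
Definition Dec (R : pzRingType) (M : lmodType R) (D N : {pred M}) : Prop :=
  is_submod D /\ is_submod N /\
  forall m : M, exists! p : M * M, [/\ p.1 \in D, p.2 \in N & p.1 + p.2 = m].

Definition DecS (R : pzRingType) (S : mod_class R) (M : lmodType R) (D N : {pred M}) : Prop :=
  Dec D N /\ exists HN : is_submod N, S (submod_of HN).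

Definition int_dsum (R : pzRingType) (M : lmodType R) (X Y Z : {pred M}) : Prop :=
  (forall m : M, m \in X -> m \in Y -> m = 0) /\
  (forall m : M, m \in Z <-> exists x y, [/\ x \in X, y \in Y & m = x + y]).

Definition dec_le (R : pzRingType) (M : lmodType R) (D N D' N' : {pred M}) : Prop :=
  exists C : {pred M}, is_submod C /\ int_dsum D' C D /\ int_dsum N C N'.

Definition maximalS (R : pzRingType) (S : mod_class R) (M : lmodType R) (D N : {pred M}) : Prop :=
  DecS S D N /\
  forall D' N' : {pred M}, DecS S D' N' -> dec_le D N D' N' -> D' =i D /\ N' =i N.

Definition is_aut (R : pzRingType) (M : lmodType R) (g : M -> M) : Prop :=
  is_lin g /\ bijective g.

Definition pred_image (R : pzRingType) (M : lmodType R) (g : M -> M) (X Y : {pred M}) : Prop :=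
  forall m : M, m \in Y <-> exists2 x, x \in X & g x = m.

Definition aut_act (R : pzRingType) (M : lmodType R) (g : M -> M) (D N D' N' : {pred M}) : Prop :=
  pred_image g D D' /\ pred_image g N N'.

Definition finite_length (R : pzRingType) (M : lmodType R) : Prop :=
  forall C : {pred M} -> Prop,
    (forall P, C P -> is_submod P) ->
    (forall P Q, C P -> C Q -> {subset P <= Q} \/ {subset Q <= P}) ->
    exists s : seq {pred M}, forall P, C P -> exists i, (i < size s)%N /\ P =i nth (fun _ => false) s i.

From Pilot Require Import Defs.
From HB Require Import structures.
From mathcomp Require Import all_boot all_algebra.
From mathcomp Require Import boolp.
Set Implicit Arguments. Unset Strict Implicit. Unset Printing Implicit Defensive.
Import GRing.Theory.
(* [GRing.Theory] exports a deprecated [multiplicative]; restore the one of [Defs]. *)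
Import Pilot.Defs.
Local Open Scope ring_scope.

(* A Fitting-type argument drives everything.  Let X be in S and let an
   endomorphism f = q r of X factor through a submodule Y with no nonzero divisor
   in S.  For n large, f is bijective on the image I of f^n, so I splits off X
   (split by f^n) and off Y (split by f^n q, as f^n q r = f^(n+1)).  Hence I is in
   S by saturation, so I = 0 and f is nilpotent.
   For maximal (A1, A2) and (B1, B2), let p project onto A2 along A1 and q onto
   B2 along B1.  On B2 the map id - q p = q (id - p) factors through A1, hence is
   nilpotent, so q p is an automorphism of B2; symmetrically p q is one of A2.
   This gives the direct sums M = A1 + B2 = B1 + A2.  Two complements of the same
   submodule are isomorphic, so A1 ~ B1 and A2 ~ B2, and these glue to an
   automorphism of M.  Maximality of (A1, A2) amounts to A1 having no nonzero
   divisor in S, and maximal elements exist because the first components of a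
   strictly increasing sequence in Dec_S(M) would form a strictly decreasing
   chain of submodules. *)

Section LinearMaps.
Variable R : pzRingType.
Implicit Types U V W : lmodType R.

Section Laws.
Variables (U V : lmodType R) (f : U -> V) (Hf : is_lin f).
Let fL : {linear U -> V} := HB.pack f (GRing.isLinear.Build _ _ _ _ f Hf).

Lemma is_lin0 : f 0 = 0. Proof. exact: raddf0 fL. Qed.
Lemma is_linD x y : f (x + y) = f x + f y. Proof. exact: raddfD fL x y. Qed.
Lemma is_linB x y : f (x - y) = f x - f y. Proof. exact: raddfB fL x y. Qed.
Lemma is_lin_sum n (F : nat -> U) :
  f (\sum_(0 <= i < n) F i) = \sum_(0 <= i < n) f (F i).
Proof. exact: (raddf_sum fL). Qed.

Lemma is_lin_inj : (forall x, f x = 0 -> x = 0) -> injective f.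
Proof. by move=> f0 x y e; apply/subr0_eq/f0; rewrite is_linB e subrr. Qed.
End Laws.

Lemma is_lin_comp U V W (f : U -> V) (g : V -> W) :
  is_lin f -> is_lin g -> is_lin (g \o f).
Proof. by move=> Hf Hg a x y /=; rewrite Hf Hg. Qed.

Lemma is_lin_id_sub U (f : U -> U) : is_lin f -> is_lin (fun x => x - f x).
Proof. by move=> Hf a x y; rewrite Hf scalerBr opprD addrACA. Qed.

Lemma is_lin_pairl U V : is_lin (fun u : U => (u, 0 : V)).
Proof. by move=> a x y; congr (_, _); rewrite /= scaler0 addr0. Qed.

Lemma is_lin_pairr U V : is_lin (fun v : V => (0 : U, v)).
Proof. by move=> a x y; congr (_, _); rewrite /= scaler0 addr0. Qed.

Lemma is_lin_iter U (f : U -> U) k : is_lin f -> is_lin (iter k f).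
Proof. by move=> Hf; elim: k => [|k IH] a x y //=; rewrite IH Hf. Qed.

Lemma is_lin_can U V (f : U -> V) (g : V -> U) :
  is_lin f -> cancel f g -> cancel g f -> is_lin g.
Proof. by move=> Hf fK gK a x y; apply: (can_inj fK); rewrite Hf !gK. Qed.

Lemma is_lin_bij U V (f : U -> V) : is_lin f -> (forall x, f x = 0 -> x = 0) ->
  (forall y, exists x, f x = y) -> bijective f.
Proof.
move=> Hf f0 /choice[g fgK]; exists g => // x.
by apply: (is_lin_inj Hf f0); rewrite fgK.
Qed.

Lemma mod_iso_lin U V (f : U -> V) : is_lin f -> (forall x, f x = 0 -> x = 0) ->
  (forall y, exists x, f x = y) -> mod_iso U V.
Proof. by move=> Hf f0 fsurj; exists f; split; last exact: is_lin_bij. Qed.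

Lemma mod_iso_sym U V : mod_iso U V -> mod_iso V U.
Proof.
by case=> f [Hf [g fK gK]]; exists g; split; [exact: is_lin_can Hf fK gK | exists f].
Qed.

Lemma mod_iso_trans U V W : mod_iso U V -> mod_iso V W -> mod_iso U W.
Proof.
case=> f [Hf bf] [g [Hg bg]]; exists (g \o f).
by split; [exact: is_lin_comp | exact: bij_comp].
Qed.

Lemma mod_iso_swap U V : mod_iso (U * V)%type (V * U)%type.
Proof.
exists (fun p => (p.2, p.1)); split; first by move=> a [x1 x2] [y1 y2].
by exists (fun p => (p.2, p.1)) => [[x y]|[x y]].
Qed.

Lemma mod_iso_zero U V : is_zero_mod U -> is_zero_mod V -> mod_iso U V.
Proof.
move=> U0 V0; exists (fun _ => 0); split; first by move=> *; rewrite scaler0 addr0.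
by exists (fun _ => 0) => x; rewrite ?(U0 x) ?(V0 x).
Qed.

Lemma is_zero_mod_iso U V : mod_iso U V -> is_zero_mod V -> is_zero_mod U.
Proof.
case=> f [Hf [g fK _]] V0 x.
by rewrite -(fK x) -(fK 0) (V0 (f x)) (V0 (f 0)).
Qed.

Lemma mod_iso_prodr0 U V Z : mod_iso U V -> is_zero_mod Z -> mod_iso U (V * Z)%type.
Proof.
case=> f [Hf [g fK gK]] Z0; exists (fun u => (f u, 0)); split.
  by move=> a x y; rewrite Hf; congr (_, _); rewrite /= scaler0 addr0.
by exists (fun p => g p.1) => [x|[y z]] //=; rewrite gK (Z0 z).
Qed.

Lemma multiplicative_iso (S : mod_class R) U V :
  multiplicative S -> mod_iso U V -> S V -> S U.
Proof.
case=> [[Z [Z0 SZ]] SM] UV SV.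
exact: SM _ _ _ (mod_iso_prodr0 UV Z0) SV SZ.
Qed.

Lemma divisor_iso D U V : mod_iso U V -> divisor D V -> divisor D U.
Proof. by move=> UV [N VN]; exists N; exact: mod_iso_trans UV VN. Qed.

End LinearMaps.

Section Submodules.
Variables (R : pzRingType) (M : lmodType R).
Implicit Types (X Y Z : {pred M}) (f : M -> M).

Lemma submod0 (U : lmodType R) (X : {pred U}) : is_submod X -> 0 \in X.
Proof. by case. Qed.

Lemma submodD X : is_submod X -> {in X &, forall x y, x + y \in X}.
Proof. by move=> [_ HX] x y hx hy; have := HX 1 x y hx hy; rewrite scale1r. Qed.

Lemma submodZ X a : is_submod X -> {in X, forall x, a *: x \in X}.
Proof. by move=> [X0 HX] x hx; have := HX a x 0 hx X0; rewrite addr0. Qed.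

Lemma submodN X : is_submod X -> {in X, forall x, - x \in X}.
Proof. by move=> HX x hx; rewrite -scaleN1r submodZ. Qed.

Lemma submodB X : is_submod X -> {in X &, forall x y, x - y \in X}.
Proof. by move=> HX x y hx hy; rewrite submodD ?submodN. Qed.

Lemma submodT (U : lmodType R) : is_submod (predT : {pred U}).
Proof. by []. Qed.

Definition in_submod X (HX : is_submod X) x (hx : x \in X) : submod_of HX :=
  exist _ x hx.

Lemma submod_zero X (HX : is_submod X) :
  is_zero_mod (submod_of HX) <-> {in X, forall x, x = 0}.
Proof.
split=> [X0 x hx | X0 x]; first by have := congr1 val (X0 (in_submod HX hx)).
by apply: val_inj; rewrite /= (X0 _ (valP x)).
Qed.

Definition lin_image (U : lmodType R) (f : U -> M) (X : {pred U}) : {pred M} :=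
  [pred m | `[< exists2 x, x \in X & f x = m >]].

Lemma lin_imageP (U : lmodType R) (f : U -> M) (X : {pred U}) m :
  reflect (exists2 x, x \in X & f x = m) (m \in lin_image f X).
Proof. exact: asboolP. Qed.

Lemma mem_lin_image (U : lmodType R) (f : U -> M) (X : {pred U}) x :
  x \in X -> f x \in lin_image f X.
Proof. by move=> hx; apply/lin_imageP; exists x. Qed.

Lemma is_submod_image (U : lmodType R) (f : U -> M) (X : {pred U}) :
  is_lin f -> is_submod X -> is_submod (lin_image f X).
Proof.
move=> Hf [X0 HX]; split; first by rewrite -(is_lin0 Hf) mem_lin_image.
move=> a _ _ /lin_imageP[x hx <-] /lin_imageP[y hy <-].
by rewrite -Hf mem_lin_image ?HX.
Qed.

Lemma image_iso (U : lmodType R) (f : U -> M) (Hf : is_lin f) :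
  (forall u, f u = 0 -> u = 0) ->
  mod_iso U (submod_of (is_submod_image Hf (submodT U))).
Proof.
move=> f0.
apply: (mod_iso_lin (f := fun u => in_submod _ (mem_lin_image f (isT : u \in predT)))).
- by move=> a x y; apply: val_inj; rewrite /= Hf.
- by move=> u /(congr1 val)/f0.
- move=> v; have /lin_imageP[u _ fu] := valP v.
  by exists u; apply: val_inj.
Qed.

Definition ker_in f X : {pred M} := [pred x in X | f x == 0].

Lemma is_submod_ker f X : is_lin f -> is_submod X -> is_submod (ker_in f X).
Proof.
move=> Hf [X0 HX]; split; first by rewrite /ker_in inE X0 (is_lin0 Hf) eqxx.
move=> a x y; rewrite /ker_in !inE => /andP[hx /eqP fx] /andP[hy /eqP fy].
by rewrite HX //= Hf fx fy scaler0 addr0.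
Qed.

Lemma trivI_add_eq0 X Y x y : is_submod Y -> {in X, forall m, m \in Y -> m = 0} ->
  x \in X -> y \in Y -> x + y = 0 -> x = 0 /\ y = 0.
Proof.
move=> HY cap hx hy /eqP; rewrite addr_eq0 => /eqP xy.
have x0 : x = 0 by apply: cap; rewrite // xy submodN.
by split=> //; apply/eqP; rewrite -oppr_eq0 -xy x0.
Qed.

Definition add_val X Y (HX : is_submod X) (HY : is_submod Y)
  (u : (submod_of HX * submod_of HY)%type) : M := val u.1 + val u.2.
Arguments add_val {X Y} HX HY u.

Lemma is_lin_add_val X Y (HX : is_submod X) (HY : is_submod Y) : is_lin (add_val HX HY).
Proof. by move=> a u v; rewrite /add_val /= scalerDr addrACA. Qed.

Lemma int_dsum_iso X Y Z (HX : is_submod X) (HY : is_submod Y) (HZ : is_submod Z) :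
  int_dsum X Y Z -> mod_iso (submod_of HZ) (submod_of HX * submod_of HY)%type.
Proof.
move=> [cap sumE]; apply: mod_iso_sym.
have XYZ (u : submod_of HX * submod_of HY) : val u.1 + val u.2 \in Z.
  by apply/sumE; exists (val u.1), (val u.2); split=> //; exact: valP.
apply: (mod_iso_lin (f := fun u => in_submod HZ (XYZ u))).
- by move=> a u v; apply: val_inj; rewrite /= scalerDr addrACA.
- move=> [[x hx] [y hy]] /(congr1 val) /(trivI_add_eq0 HY cap hx hy)[x0 y0].
  by congr (_, _); apply: val_inj.
- move=> z; have /sumE[x [y [hx hy e]]] := valP z.
  by exists (in_submod HX hx, in_submod HY hy); apply: val_inj.
Qed.

Lemma int_dsum_divisorr X Y Z (HX : is_submod X) (HY : is_submod Y) (HZ : is_submod Z) :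
  int_dsum X Y Z -> divisor (submod_of HY) (submod_of HZ).
Proof.
move=> XYZ; exists (submod_of HX).
exact: mod_iso_trans (int_dsum_iso _ _ _ XYZ) (mod_iso_swap _ _).
Qed.

Lemma int_dsum_eq0r X Y Z : is_submod Y -> int_dsum X Y Z -> {in Y, forall y, y = 0} -> X =i Z.
Proof.
move=> HY [_ sumE] Y0 m; apply/idP/idP => [hm | /sumE[x [y [hx hy ->]]]].
  by apply/sumE; exists m, 0; rewrite addr0 submod0.
by rewrite (Y0 y hy) addr0.
Qed.

Lemma int_dsum_subl X Y Z : is_submod Y -> int_dsum X Y Z -> {subset X <= Z}.
Proof. by move=> HY [_ sumE] x hx; apply/sumE; exists x, 0; rewrite addr0 submod0. Qed.

Lemma int_dsum_subr X Y Z : is_submod X -> int_dsum X Y Z -> {subset Y <= Z}.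
Proof. by move=> HX [_ sumE] y hy; apply/sumE; exists 0, y; rewrite add0r submod0. Qed.

Definition sum_pred X Y : {pred M} :=
  [pred m | `[< exists x y, [/\ x \in X, y \in Y & m = x + y] >]].

Lemma is_submod_sum X Y : is_submod X -> is_submod Y -> is_submod (sum_pred X Y).
Proof.
move=> HX HY; split; first by apply/asboolP; exists 0, 0; rewrite addr0 !submod0.
move=> a _ _ /asboolP[x1 [y1 [hx1 hy1 ->]]] /asboolP[x2 [y2 [hx2 hy2 ->]]].
apply/asboolP; exists (a *: x1 + x2), (a *: y1 + y2).
by rewrite (proj2 HX) ?(proj2 HY) // scalerDr addrACA.
Qed.

Lemma int_dsum_sum X Y : {in X, forall m, m \in Y -> m = 0} -> int_dsum X Y (sum_pred X Y).
Proof. by move=> cap; split=> // m; split=> /asboolP. Qed.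

Lemma divisor_int_dsum X (HX : is_submod X) (D : lmodType R) : divisor D (submod_of HX) ->
  exists C X' (HC : is_submod C),
    [/\ is_submod X', int_dsum X' C X & mod_iso D (submod_of HC)].
Proof.
case=> N /mod_iso_sym[g [Hg [h gK hK]]].
have HgX : is_lin (val \o g) by move=> a x y; rewrite /= Hg.
have HiD := is_lin_comp (@is_lin_pairl _ D N) HgX.
have HiN := is_lin_comp (@is_lin_pairr _ D N) HgX.
set iD := _ \o _ in HiD; set iN := _ \o _ in HiN.
have iD0 d : iD d = 0 -> d = 0.
  move=> e; have /(can_inj gK)/(congr1 fst) // : g (d, 0) = g 0.
  by apply: val_inj; rewrite (is_lin0 Hg); exact: e.
exists (lin_image iD predT), (lin_image iN predT), (is_submod_image HiD (submodT D)).
split; [exact: is_submod_image HiN (submodT N) | | exact: image_iso HiD iD0].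
split=> [_ /lin_imageP[n _ <-] /lin_imageP[d _ /val_inj /(can_inj gK) e] | m].
  by move/(congr1 snd): e => /= <-; rewrite (is_lin0 HiN).
split=> [hm | [_ [_ [/lin_imageP[n _ <-] /lin_imageP[d _ <-] ->]]]]; last first.
  by apply: (submodD HX); apply: valP.
pose u := h (in_submod HX hm).
exists (iN u.2), (iD u.1); rewrite !mem_lin_image //; split=> //.
have e : (0, u.2) + (u.1, 0) = u :> (D * N)%type.
  by apply: injective_projections; rewrite /= ?add0r ?addr0.
by rewrite /iN /iD /= -[RHS]/(val (g (0, u.2) + g (u.1, 0))) -(is_linD Hg) e hK.
Qed.

Lemma pred_image_submod (g : M -> M) X Y :
  is_lin g -> is_submod X -> pred_image g X Y -> is_submod Y.
Proof.
move=> Hg [X0 HX] gXY; split; first by apply/gXY; exists 0; rewrite ?(is_lin0 Hg).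
by move=> a _ _ /gXY[x hx <-] /gXY[y hy <-]; apply/gXY; exists (a *: x + y); rewrite ?HX ?Hg.
Qed.

Lemma pred_image_iso (g : M -> M) X Y (HX : is_submod X) (HY : is_submod Y) :
  is_lin g -> injective g -> pred_image g X Y -> mod_iso (submod_of HX) (submod_of HY).
Proof.
move=> Hg ginj gXY.
have gY (x : submod_of HX) : g (val x) \in Y by apply/gXY; exists (val x) => //; exact: valP.
apply: (mod_iso_lin (f := fun x => in_submod HY (gY x))).
- by move=> a x y; apply: val_inj; rewrite /= Hg.
- by move=> x /(congr1 val) /=; rewrite -(is_lin0 Hg) => /ginj x0; apply: val_inj.
- by move=> y; have /gXY[x hx e] := valP y; exists (in_submod HX hx); apply: val_inj.
Qed.

Lemma retract_divisor X Y (HX : is_submod X) (HY : is_submod Y) (r s : M -> M) :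
  is_lin r -> is_lin s -> {in X, forall x, r x \in Y} ->
  {in X, forall x, s (r x) = 0 -> x = 0} ->
  {in Y, forall y, exists2 x, x \in X & s (r x) = s y} ->
  divisor (submod_of HX) (submod_of HY).
Proof.
move=> Hr Hs rY sr0 srY; have HK := is_submod_ker Hs HY.
exists (submod_of HK); apply: mod_iso_sym.
have rkY (u : (submod_of HX * submod_of HK)%type) : r (val u.1) + val u.2 \in Y.
  by have /andP[hk _] := valP u.2; rewrite submodD ?rY //; exact: valP.
apply: (mod_iso_lin (f := fun u => in_submod HY (rkY u))).
- by move=> a u v; apply: val_inj; rewrite /= Hr scalerDr addrACA.
- move=> [[x hx] [k hk]] /(congr1 val) /= e.
  have /andP[_ /eqP sk] : (k \in Y) && (s k == 0) := hk.
  have x0 : x = 0 by apply: sr0; rewrite // -[LHS]addr0 -sk -(is_linD Hs) e (is_lin0 Hs).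
  have k0 : k = 0 by move: e; rewrite x0 (is_lin0 Hr) add0r.
  by congr (_, _); apply: val_inj; rewrite /= ?x0 ?k0.
- move=> y; have [x hx sry] := srY _ (valP y).
  have hk : val y - r x \in ker_in s Y.
    by rewrite inE submodB ?rY //=; [rewrite (is_linB Hs) sry subrr | exact: valP].
  by exists (in_submod HX hx, in_submod HK hk); apply: val_inj; rewrite /= addrC subrK.
Qed.

End Submodules.

Arguments add_val {R M X Y} HX HY u.
Arguments is_lin_add_val {R M X Y} HX HY.

Section Decompositions.
Variables (R : pzRingType) (M : lmodType R).
Implicit Types (X Y Z A B C D N : {pred M}) (f g p : M -> M).

Lemma Dec_submodl X Y : Dec X Y -> is_submod X. Proof. by case. Qed.
Lemma Dec_submodr X Y : Dec X Y -> is_submod Y. Proof. by case=> _ []. Qed.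

Lemma Dec_intro X Y : is_submod X -> is_submod Y ->
  (forall m, exists x y, [/\ x \in X, y \in Y & m = x + y]) ->
  {in X, forall m, m \in Y -> m = 0} -> Dec X Y.
Proof.
move=> HX HY sum cap; split=> //; split=> // m.
have [x [y [hx hy e]]] := sum m; exists (x, y); split=> // [[x' y'] [/= hx' hy' e']].
have : (x - x') + (y - y') = 0 by rewrite addrACA -opprD e' -e subrr.
case/(trivI_add_eq0 HY cap (submodB HX hx hx') (submodB HY hy hy')).
by move=> /subr0_eq-> /subr0_eq->.
Qed.

Lemma Dec_sum X Y : Dec X Y -> forall m, exists x y, [/\ x \in X, y \in Y & m = x + y].
Proof. by move=> [_ [_ D]] m; have [[x y] [[/= hx hy e] _]] := D m; exists x, y. Qed.

Lemma Dec_cap X Y : Dec X Y -> {in X, forall m, m \in Y -> m = 0}.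
Proof.
move=> [HX [HY D]] m hx hy; have [c [_ U]] := D m.
have e1 := U (m, 0) (And3 hx (submod0 HY) (addr0 m)).
have e2 := U (0, m) (And3 (submod0 HX) hy (add0r m)).
by have := congr1 fst (etrans (esym e1) e2).
Qed.

Lemma Dec_sym X Y : Dec X Y -> Dec Y X.
Proof.
move=> D; apply: Dec_intro; [exact: Dec_submodr D | exact: Dec_submodl D | |].
  by move=> m; have [x [y [hx hy ->]]] := Dec_sum D m; exists y, x; rewrite addrC.
by move=> m hy hx; exact: Dec_cap D m hx hy.
Qed.

Definition proj_onto X Y p := [/\ is_lin p, forall m, p m \in X, forall m, m - p m \in Y,
  {in X, forall x, p x = x} & {in Y, forall y, p y = 0}].

Lemma Dec_proj X Y : Dec X Y -> exists p, proj_onto X Y p.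
Proof.
move=> D; have [HX [HY Duniq]] := D.
have /choice[c Hc] : forall m, exists c : M * M, [/\ c.1 \in X, c.2 \in Y & c.1 + c.2 = m].
  by move=> m; have [c [Hc _]] := Duniq m; exists c.
have cE m x y : x \in X -> y \in Y -> x + y = m -> (c m).1 = x.
  move=> hx hy e; have [c' [_ U]] := Duniq m.
  by rewrite -(U _ (Hc m)) (U (x, y)).
have c1X m : (c m).1 \in X by case: (Hc m).
have c2Y m : (c m).2 \in Y by case: (Hc m).
have cm m : (c m).1 + (c m).2 = m by case: (Hc m).
exists (fun m => (c m).1); split=> [a x y | m | m | x hx | y hy].
- apply: (cE _ _ (a *: (c x).2 + (c y).2)); rewrite ?(proj2 HX) ?(proj2 HY) //.
  by rewrite addrACA -scalerDr !cm.
- exact: c1X.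
- by rewrite -{1}(cm m) addrC addKr.
- exact: cE hx (submod0 HY) (addr0 x).
- exact: cE (submod0 HX) hy (add0r y).
Qed.

Lemma DecS_predT0 (S : mod_class R) : multiplicative S -> DecS S predT (pred1 (0 : M)).
Proof.
move=> HS; have H0 : is_submod (pred1 (0 : M)).
  by split=> [|a x y /eqP-> /eqP->]; rewrite inE ?scaler0 ?addr0.
split.
  apply: Dec_intro => // [m|m _ /eqP //].
  by exists m, 0; rewrite addr0; split=> //; exact: eqxx.
exists H0; have [[Z [Z0 SZ]] _] := HS.
apply: multiplicative_iso HS (mod_iso_zero _ Z0) SZ.
by apply/submod_zero => x /eqP.
Qed.

Lemma Dec_enlarge A1 A2 A1' C : Dec A1 A2 -> is_submod A1' -> is_submod C ->
  int_dsum A1' C A1 ->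
  [/\ Dec A1' (sum_pred A2 C), int_dsum A2 C (sum_pred A2 C)
    & dec_le A1 A2 A1' (sum_pred A2 C)].
Proof.
move=> DA HA1' HC dsA1; have HA2 := Dec_submodr DA.
have CA1 := int_dsum_subr HA1' dsA1; have A1'A1 := int_dsum_subl HC dsA1.
have dsN : int_dsum A2 C (sum_pred A2 C).
  by apply: int_dsum_sum => m h2 hc; exact: (Dec_cap DA (CA1 _ hc) h2).
split=> //; last by exists C.
apply: Dec_intro => // [|m|m h1 /asboolP[a [c [ha hc e]]]]; first exact: is_submod_sum.
  have [x [y [hx hy ->]]] := Dec_sum DA m; have /(proj2 dsA1)[x' [c [hx' hc ->]]] := hx.
  exists x', (y + c); split=> //; last by rewrite addrAC -addrA.
  by apply/asboolP; exists y, c.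
have a0 : a = 0.
  apply: (Dec_cap DA) ha; rewrite (_ : a = m - c); last by rewrite e addrK.
  by apply: (submodB (Dec_submodl DA)); [exact: A1'A1 | exact: CA1].
by apply: (proj1 dsA1) h1 _; rewrite e a0 add0r.
Qed.

Lemma dec_le_eqi D N D' N' C : is_submod C -> int_dsum D' C D -> int_dsum N C N' ->
  {in C, forall c, c = 0} -> D' =i D /\ N' =i N.
Proof.
move=> HC ds1 ds2 C0; split=> [|m]; first exact: int_dsum_eq0r HC ds1 C0.
by rewrite (int_dsum_eq0r HC ds2 C0).
Qed.

Lemma Dec_add_bij X Y (HX : is_submod X) (HY : is_submod Y) :
  Dec X Y -> bijective (add_val HX HY).
Proof.
move=> D; apply: is_lin_bij; first exact: is_lin_add_val.
  move=> [[x hx] [y hy]] /(trivI_add_eq0 (Dec_submodr D) (Dec_cap D) hx hy)[x0 y0].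
  by congr (_, _); apply: val_inj.
by move=> m; have [x [y [hx hy ->]]] := Dec_sum D m; exists (in_submod HX hx, in_submod HY hy).
Qed.

Lemma Dec_compl_iso X Y Z (HX : is_submod X) (HY : is_submod Y) :
  Dec X Z -> Dec Y Z -> mod_iso (submod_of HX) (submod_of HY).
Proof.
move=> DX DY; have [u [Hu uY uZ uid u0]] := Dec_proj DY.
apply: (mod_iso_lin (f := fun x : submod_of HX => in_submod HY (uY (val x)))).
- by move=> a x y; apply: val_inj; rewrite /= Hu.
- move=> [x hx] /(congr1 val) /= ux0; apply: val_inj => /=.
  by apply: (Dec_cap DX hx); rewrite -(subr0 x) -ux0 uZ.
- move=> y; have [x [z [hx hz e]]] := Dec_sum DX (val y).
  exists (in_submod HX hx); apply: val_inj => /=.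
  by rewrite -[RHS](uid _ (valP y)) e (is_linD Hu) (u0 z hz) addr0.
Qed.

Lemma Dec_aut A1 A2 B1 B2 (HA1 : is_submod A1) (HA2 : is_submod A2)
    (HB1 : is_submod B1) (HB2 : is_submod B2) :
  Dec A1 A2 -> Dec B1 B2 -> mod_iso (submod_of HA1) (submod_of HB1) ->
  mod_iso (submod_of HA2) (submod_of HB2) -> exists g, is_aut g /\ aut_act g A1 A2 B1 B2.
Proof.
move=> DA DB [f1 [Hf1 [h1 f1K h1K]]] [f2 [Hf2 [h2 f2K h2K]]].
have [iA addAK iAK] := Dec_add_bij HA1 HA2 DA.
have [iB addBK iBK] := Dec_add_bij HB1 HB2 DB.
pose f12 (u : (submod_of HA1 * submod_of HA2)%type) := (f1 u.1, f2 u.2).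
pose h12 (v : (submod_of HB1 * submod_of HB2)%type) := (h1 v.1, h2 v.2).
pose g := add_val HB1 HB2 \o f12 \o iA.
have Hg : is_lin g.
  apply: is_lin_comp (is_lin_add_val _ _).
  apply: is_lin_comp (is_lin_can (is_lin_add_val _ _) addAK iAK) _.
  by move=> a u v; rewrite /f12 /= Hf1 Hf2.
have iA1 x (hx : x \in A1) : iA x = (in_submod HA1 hx, 0).
  by apply: (can_inj addAK); rewrite iAK /add_val /= addr0.
have iA2 x (hx : x \in A2) : iA x = (0, in_submod HA2 hx).
  by apply: (can_inj addAK); rewrite iAK /add_val /= add0r.
have gA1 x (hx : x \in A1) : g x = val (f1 (in_submod HA1 hx)).
  by rewrite /g /= (iA1 x hx) /add_val /= (is_lin0 Hf2) addr0.
have gA2 x (hx : x \in A2) : g x = val (f2 (in_submod HA2 hx)).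
  by rewrite /g /= (iA2 x hx) /add_val /= (is_lin0 Hf1) add0r.
have f12K : cancel f12 h12 by case=> u1 u2; rewrite /f12 /h12 /= f1K f2K.
have h12K : cancel h12 f12 by case=> v1 v2; rewrite /f12 /h12 /= h1K h2K.
exists g; split.
  split=> //; exists (add_val HA1 HA2 \o h12 \o iB) => m /=.
    by rewrite addBK f12K iAK.
  by rewrite /g /= addAK h12K iBK.
split=> m; split=> [hm | [x hx <-]].
- exists (val (h1 (in_submod HB1 hm))); first exact: valP.
  rewrite (gA1 _ (valP _)) (_ : in_submod _ _ = h1 (in_submod HB1 hm)) ?h1K //.
  exact: val_inj.
- by rewrite (gA1 x hx); exact: valP.
- exists (val (h2 (in_submod HB2 hm))); first exact: valP.
  rewrite (gA2 _ (valP _)) (_ : in_submod _ _ = h2 (in_submod HB2 hm)) ?h2K //.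
  exact: val_inj.
- by rewrite (gA2 x hx); exact: valP.
Qed.

Lemma Dec_aut_image g A1 A2 B1 B2 : is_aut g -> Dec A1 A2 ->
  pred_image g A1 B1 -> pred_image g A2 B2 -> Dec B1 B2.
Proof.
move=> [Hg [h gK hK]] DA gA1 gA2.
apply: Dec_intro; first exact: pred_image_submod Hg (Dec_submodl DA) gA1.
- exact: pred_image_submod Hg (Dec_submodr DA) gA2.
- move=> m; have [x [y [hx hy e]]] := Dec_sum DA (h m).
  exists (g x), (g y); rewrite -(is_linD Hg) -e hK.
  by split=> //; [apply/gA1; exists x | apply/gA2; exists y].
move=> _ /gA1[x hx <-] /gA2[y hy /(can_inj gK) yx].
by rewrite (Dec_cap DA hx) ?(is_lin0 Hg) // -yx.
Qed.

End Decompositions.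

Section Endomorphisms.
Variables (R : pzRingType) (M : lmodType R).
Implicit Types (X : {pred M}) (f : M -> M).

Definition aut_on X f := [/\ {in X, forall x, f x \in X},
  {in X, forall x, f x = 0 -> x = 0} & {in X, forall y, exists2 x, x \in X & f x = y}].

Lemma iter_in X f :
  {in X, forall x, f x \in X} -> forall k, {in X, forall x, iter k f x \in X}.
Proof. by move=> fX k x hx; elim: k => //= k; exact: fX. Qed.

Lemma aut_on_iter X f k : aut_on X f -> aut_on X (iter k f).
Proof.
case=> fX f0 fS; elim: k => [|k [_ IH0 IHS]]; first by split=> // y hy; exists y.
split=> [x hx | x hx /= /f0 fx0 | y hy]; first exact: iter_in.
  by apply: IH0; rewrite // fx0 // iter_in.
have [z hz <-] := fS y hy; have [x hx <-] := IHS z hz.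
by exists x.
Qed.

Lemma unipotent_aut_on X f n : is_lin f -> is_submod X ->
  {in X, forall x, f x \in X} -> {in X, forall x, iter n f x = 0} ->
  aut_on X (fun x => x - f x).
Proof.
move=> Hf HX fX fn0; split=> [x hx | x hx /eqP | y hy]; first by rewrite submodB ?fX.
  rewrite subr_eq0 => /eqP fx; have xk k : iter k f x = x by elim: k => //= k ->; rewrite -fx.
  by rewrite -(xk n) fn0.
exists (\sum_(0 <= k < n) iter k f y).
  apply: (big_ind (fun z => z \in X)) => [|u v|k _]; first exact: submod0.
    exact: submodD.
  exact: (iter_in fX k hy).
rewrite (is_lin_sum Hf) -opprB -sumrB (@telescope_sumr_eq _ 0 n (fun k => iter k f y)) //.
by rewrite fn0 // sub0r opprK.
Qed.

End Endomorphisms.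

Section FiniteLength.
Variables (R : pzRingType) (M : lmodType R).
Hypothesis FL : finite_length M.
Implicit Types (X : {pred M}) (f : M -> M).

Lemma chain_stationary (P : nat -> {pred M}) : (forall k, is_submod (P k)) ->
  (forall k, {subset P k.+1 <= P k}) \/ (forall k, {subset P k <= P k.+1}) ->
  exists n, forall k, (n <= k)%N -> P k =i P n.
Proof.
move=> HP mono.
have {}mono : (forall k l, (k <= l)%N -> {subset P l <= P k}) \/
              (forall k l, (k <= l)%N -> {subset P k <= P l}).
  case: mono => [D|I]; [left | right].
    by apply: (homo_leq (r := fun Q Q' : {pred M} => {subset Q' <= Q}) _ _ D)
      => [Q m | ? ? ? xy yz m /yz /xy].
  by apply: (homo_leq (r := fun Q Q' : {pred M} => {subset Q <= Q'}) _ _ I)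
    => [Q m | ? ? ? xy yz m /xy /yz].
have HC Q : (exists k, Q = P k) -> is_submod Q by move=> [k ->].
have chain Q Q' : (exists k, Q = P k) -> (exists k, Q' = P k) ->
    {subset Q <= Q'} \/ {subset Q' <= Q}.
  move=> [k ->] [l ->]; case: mono => mono.
    by case: (leqP k l) => [kl | /ltnW lk]; [right | left]; exact: mono.
  by case: (leqP k l) => [kl | /ltnW lk]; [left | right]; exact: mono.
have [s Hs] := FL HC chain.
(* Each entry of [s] met by the chain is met at some index [k i]; beyond the
   largest of these indices the chain is constant. *)
have /choice[k Hk] : forall i : 'I_(size s), exists k,
    (exists l, P l =i nth (fun _ => false) s i) -> P k =i nth (fun _ => false) s i.
  move=> i; case: (pselect (exists l, P l =i nth (fun _ => false) s i)) => [[l Pl] | nPl].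
    by exists l.
  by exists 0%N => /nPl.
exists (\max_(i < size s) k i) => l nl m.
have [i [si Pl]] := Hs (P l) (ex_intro _ l erefl).
have Pk := Hk (Ordinal si) (ex_intro _ l Pl).
have kn := @leq_bigmax _ k (Ordinal si).
case: mono => mono; apply/idP/idP => [|hm].
- exact: mono.
- by rewrite Pl -Pk; apply: mono hm.
- by rewrite Pl -Pk => /(mono _ _ kn).
- exact: mono hm.
Qed.

Lemma fitting f X : is_lin f -> is_submod X -> {in X, forall x, f x \in X} ->
  exists n, aut_on (lin_image (iter n f) X) f.
Proof.
move=> Hf HX fX.
pose Im k := lin_image (iter k f) X.
pose Ker k := ker_in (iter k f) X.
have [n1 Im_n1] : exists n, forall k, (n <= k)%N -> Im k =i Im n.
  apply: chain_stationary => [k|]; first exact: is_submod_image (is_lin_iter k Hf) HX.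
  left=> k _ /lin_imageP[x hx <-].
  by rewrite iterSr mem_lin_image ?fX.
have [n2 Ker_n2] : exists n, forall k, (n <= k)%N -> Ker k =i Ker n.
  apply: chain_stationary => [k|]; first exact: is_submod_ker (is_lin_iter k Hf) HX.
  right=> k x; rewrite /Ker /ker_in !inE => /andP[hx /eqP fx].
  by rewrite hx iterS fx (is_lin0 Hf) eqxx.
pose n := maxn n1 n2.
have ImS : Im n.+1 =i Im n.
  by move=> m; rewrite Im_n1 ?(leqW (leq_maxl _ _)) // Im_n1 ?leq_maxl.
have KerS : Ker n.+1 =i Ker n.
  by move=> m; rewrite Ker_n2 ?(leqW (leq_maxr _ _)) // Ker_n2 ?leq_maxr.
exists n; split.
- move=> _ /lin_imageP[x hx <-].
  by rewrite -iterS iterSr mem_lin_image ?fX.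
- move=> _ /lin_imageP[x hx <-] fx0.
  have : x \in Ker n.+1 by rewrite /Ker /ker_in inE hx iterS fx0 eqxx.
  by rewrite KerS /Ker /ker_in inE => /andP[_ /eqP].
- move=> _ /lin_imageP[x hx <-].
  have /lin_imageP[y hy e] : iter n f x \in Im n.+1 by rewrite ImS mem_lin_image.
  by exists (iter n f y); rewrite ?mem_lin_image // -iterS.
Qed.

End FiniteLength.

Section Maximality.
Variables (R : pzRingType) (S : mod_class R) (M : lmodType R).
Implicit Types (X Y A B C D N : {pred M}) (g p q r : M -> M).

Definition no_S_divisor X := forall (HX : is_submod X) (D : lmodType R),
  S D -> divisor D (submod_of HX) -> is_zero_mod D.

Lemma no_S_divisor_of_maximalS A1 A2 : multiplicative S -> maximalS S A1 A2 -> no_S_divisor A1.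
Proof.
move=> HM [[DA [HA2 SA2]] maxA] HA1 D SD /divisor_int_dsum[C [A1' [HC [HA1' dsA1 DC]]]].
have SC : S (submod_of HC) := multiplicative_iso HM (mod_iso_sym DC) SD.
have [DA' dsN leA] := Dec_enlarge DA HA1' HC dsA1.
have HN := Dec_submodr DA'.
have SN : S (submod_of HN) := proj2 HM _ _ _ (int_dsum_iso HA2 HC HN dsN) SA2 SC.
have [A1'E _] := maxA _ _ (conj DA' (ex_intro _ HN SN)) leA.
apply: (is_zero_mod_iso DC); apply/submod_zero => c hc.
by apply: (proj1 dsA1 c _ hc); rewrite A1'E (int_dsum_subr HA1' dsA1 hc).
Qed.

Lemma maximalS_of_no_S_divisor A1 A2 : saturated S -> DecS S A1 A2 -> no_S_divisor A1 ->
  maximalS S A1 A2.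
Proof.
move=> HS DSA noA1; split=> // D' N' [DD [HN' SN']] [C [HC [dsA1 dsN']]].
have [DA [HA2 _]] := DSA.
have SC : S (submod_of HC) := proj2 HS _ _ SN' (int_dsum_divisorr HA2 HC HN' dsN').
apply: (dec_le_eqi HC dsA1 dsN'); apply/submod_zero.
apply: (noA1 (Dec_submodl DA) _ SC).
exact: (int_dsum_divisorr (Dec_submodl DD) HC (Dec_submodl DA) dsA1).
Qed.

Lemma exists_maximalS : multiplicative S -> finite_length M -> exists A1 A2, maximalS S A1 A2.
Proof.
move=> HM FL; apply: contrapT => nomax.
have /choice[next Hnext] : forall x : {pred M} * {pred M}, exists y, DecS S x.1 x.2 ->
    [/\ DecS S y.1 y.2, dec_le x.1 x.2 y.1 y.2 & ~ (y.1 =i x.1 /\ y.2 =i x.2)].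
  move=> [D N]; apply: contrapT => noy; apply: nomax; exists D, N.
  split=> [|D' N' DS' le]; first by apply: contrapT => nDN; apply: noy; exists (D, N).
  by apply: contrapT => neq; apply: noy; exists (D', N').
pose seqD k := iter k next (predT : {pred M}, pred1 0 : {pred M}).
have DSk k : DecS S (seqD k).1 (seqD k).2.
  by elim: k => [|k IH]; [exact: DecS_predT0 | have [] := Hnext _ IH].
have decr k : {subset (seqD k.+1).1 <= (seqD k).1}.
  by have [_ [C [HC [ds _]]] _] := Hnext _ (DSk k); exact: int_dsum_subl HC ds.
have [n Pn] := chain_stationary FL (fun k => Dec_submodl (DSk k).1) (or_introl decr).
have [_ [C [HC [ds1 ds2]]] neq] := Hnext _ (DSk n); apply: neq.
apply: (dec_le_eqi HC ds1 ds2) => c hc; apply: (proj1 ds1 c _ hc).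
by rewrite (Pn n.+1 (leqnSn n)) (int_dsum_subr (Dec_submodl (DSk n.+1).1) ds1 hc).
Qed.

Lemma maximalS_aut A1 A2 B1 B2 g : saturated S -> maximalS S A1 A2 -> is_aut g ->
  aut_act g A1 A2 B1 B2 -> maximalS S B1 B2.
Proof.
move=> HS MA Ag [gA1 gA2]; have noA1 := no_S_divisor_of_maximalS (proj1 HS) MA.
have [[DA [HA2 SA2]] _] := MA; have [Hg [h gK _]] := Ag.
have HB2 := pred_image_submod Hg HA2 gA2.
apply: maximalS_of_no_S_divisor => //.
  split; first exact: (Dec_aut_image Ag DA gA1 gA2).
  exists HB2; apply: (multiplicative_iso (proj1 HS) _ SA2).
  exact: (mod_iso_sym (pred_image_iso HA2 HB2 Hg (can_inj gK) gA2)).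
move=> HB1 D SD DB1; apply: (noA1 (Dec_submodl DA) D SD).
exact: (divisor_iso (pred_image_iso _ HB1 Hg (can_inj gK) gA1) DB1).
Qed.

Section Exchange.
Hypotheses (HS : saturated S) (FL : finite_length M).

Lemma factor_nilpotent X Y (HX : is_submod X) r q :
  S (submod_of HX) -> is_submod Y -> no_S_divisor Y -> is_lin r -> is_lin q ->
  (forall m, r m \in Y) -> (forall m, q m \in X) ->
  exists n, {in X, forall x, iter n (q \o r) x = 0}.
Proof.
move=> SX HY noY Hr Hq rY qX; have Hf := is_lin_comp Hr Hq.
have fX : {in X, forall x, (q \o r) x \in X} by move=> x _; exact: qX.
have [n autI] := fitting FL Hf HX fX.
set I := lin_image _ X in autI.
have HI : is_submod I := is_submod_image (is_lin_iter n Hf) HX.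
have f0 k : {in I, forall i, iter k (q \o r) i = 0 -> i = 0}.
  by case: (aut_on_iter k autI).
have fS k : {in I, forall y, exists2 x, x \in I & iter k (q \o r) x = y}.
  by case: (aut_on_iter k autI).
have divX : divisor (submod_of HI) (submod_of HX).
  apply: (retract_divisor HI HX (r := id) (s := iter n (q \o r))) => //.
  - exact: is_lin_iter.
  - by move=> _ /lin_imageP[x hx <-]; exact: (iter_in fX n hx).
  - by move=> y hy; apply: fS; exact: mem_lin_image.
have divY : divisor (submod_of HI) (submod_of HY).
  apply: (retract_divisor HI HY (r := r) (s := iter n (q \o r) \o q)) => //.
  - exact: (is_lin_comp Hq (is_lin_iter n Hf)).
  - by move=> i hi /=; rewrite -iterSr; exact: f0.
  - move=> y _; have [i hi e] := fS n.+1 _ (mem_lin_image (iter n (q \o r)) (qX y)).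
    by exists i; rewrite //= -iterSr.
have /submod_zero I0 := noY HY _ (proj2 HS _ _ SX divX) divY.
by exists n => x hx; apply: I0; exact: mem_lin_image.
Qed.

Lemma aut_on_proj_comp A1 A2 B1 B2 p q (HB2 : is_submod B2) :
  S (submod_of HB2) -> is_submod A1 -> no_S_divisor A1 ->
  proj_onto A2 A1 p -> proj_onto B2 B1 q -> aut_on B2 (q \o p).
Proof.
move=> SB2 HA1 noA1 [Hp _ pA1 _ _] [Hq qB2 _ qid _].
have [n nil] := factor_nilpotent SB2 HA1 noA1 (is_lin_id_sub Hp) Hq pA1 qB2.
have [_ f0 fS] :=
  unipotent_aut_on (is_lin_comp (is_lin_id_sub Hp) Hq) HB2 (fun x _ => qB2 _) nil.
have qpE x : x \in B2 -> x - q (x - p x) = q (p x).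
  by move=> hx; rewrite (is_linB Hq) qid // opprB addrC subrK.
split=> [x hx | x hx /= qpx | y hy]; first exact: qB2.
  by apply: f0; rewrite //= qpE.
by have [x hx e] := fS y hy; exists x; rewrite //= -qpE.
Qed.

Lemma Dec_exchange A1 A2 B1 B2 : DecS S A1 A2 -> DecS S B1 B2 ->
  no_S_divisor A1 -> no_S_divisor B1 -> Dec A1 B2.
Proof.
move=> [DA [HA2 SA2]] [DB [HB2 SB2]] noA1 noB1.
have [p Pp] := Dec_proj (Dec_sym DA); have [q Pq] := Dec_proj (Dec_sym DB).
have [_ qp0 _] := aut_on_proj_comp SB2 (Dec_submodl DA) noA1 Pp Pq.
have [_ _ pqS] := aut_on_proj_comp SA2 (Dec_submodl DB) noB1 Pq Pp.
have [Hp pA2 pA1 _ p0] := Pp; have [Hq qB2 _ _ _] := Pq.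
apply: (Dec_intro (Dec_submodl DA) HB2) => [m | x hx1 hx2].
  have [y hy pqy] := pqS _ (pA2 m).
  exists (m - q y), (q y); split=> //; last by rewrite subrK.
  by have := pA1 (m - q y); rewrite (is_linB Hp) -[p (q y)]/((p \o q) y) pqy subrr subr0.
by apply: qp0 => //=; rewrite p0 // (is_lin0 Hq).
Qed.

Lemma maximalS_exchange A1 A2 B1 B2 : maximalS S A1 A2 -> maximalS S B1 B2 ->
  maximalS S A1 B2.
Proof.
move=> MA MB; have noA1 := no_S_divisor_of_maximalS (proj1 HS) MA.
have noB1 := no_S_divisor_of_maximalS (proj1 HS) MB.
have [DSA _] := MA; have [DSB _] := MB; have [_ SB2] := DSB.
by apply: (maximalS_of_no_S_divisor HS _ noA1); split=> //; exact: (Dec_exchange DSA DSB).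
Qed.

Lemma maximalS_orbit A1 A2 B1 B2 : maximalS S A1 A2 -> maximalS S B1 B2 ->
  exists g, is_aut g /\ aut_act g A1 A2 B1 B2.
Proof.
move=> MA MB; have [[DA _] _] := MA; have [[DB _] _] := MB.
have [[DAB _] _] := maximalS_exchange MA MB; have [[DBA _] _] := maximalS_exchange MB MA.
apply: (Dec_aut (HA1 := Dec_submodl DA) (HB1 := Dec_submodl DB)
                (HA2 := Dec_submodr DA) (HB2 := Dec_submodr DB) DA DB).
  exact: (Dec_compl_iso _ _ DA DBA).
exact: (Dec_compl_iso _ _ (Dec_sym DA) (Dec_sym DAB)).
Qed.

End Exchange.
End Maximality.

Unset Implicit Arguments.
Theorem proposition2p11 (R : pzRingType) (S : mod_class R) (M N : lmodType R) :
  multiplicative S ->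
  (* (i) *)
  (mod_iso M N -> S N -> S M) /\
  (* (ii) *)
  (exists D1 D2 : {pred M}, DecS S D1 D2) /\
  (saturated S -> finite_length M ->
   (* (iii) *)
   (forall A1 A2 : {pred M}, DecS S A1 A2 ->
      (maximalS S A1 A2 <->
       forall (HA1 : is_submod A1) (D : lmodType R),
         S D -> divisor D (submod_of HA1) -> is_zero_mod D)) /\
   (* (iv) *)
   ((exists A1 A2 : {pred M}, maximalS S A1 A2) /\
    (forall A1 A2 : {pred M}, maximalS S A1 A2 ->
       forall B1 B2 : {pred M},
         maximalS S B1 B2 <-> exists g : M -> M, is_aut g /\ aut_act g A1 A2 B1 B2)) /\
   (* (v) *)
   (forall A1 A2 B1 B2 : {pred M}, maximalS S A1 A2 -> maximalS S B1 B2 ->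
      maximalS S A1 B2 /\ maximalS S B1 A2)).
Proof.
move=> HM; split; first exact: multiplicative_iso.
split; first by exists (predT : {pred M}), (pred1 0 : {pred M}); exact: DecS_predT0.
move=> HS FL; split.
  move=> A1 A2 DSA; split; first exact: no_S_divisor_of_maximalS.
  exact: (maximalS_of_no_S_divisor HS DSA).
split; last first.
  move=> A1 A2 B1 B2 MA MB.
  by split; [exact: (maximalS_exchange HS FL MA MB) | exact: (maximalS_exchange HS FL MB MA)].
split; first exact: exists_maximalS.
move=> A1 A2 MA B1 B2; split; first exact: (maximalS_orbit HS FL MA).
by case=> g [Ag act]; exact: (maximalS_aut HS MA Ag act).
Qed.
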